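(* $rx_3(K_{2,t})=4$ for every $5\leq t\leq 8$, and $rx_3(K_{2,t})\geq 5$ for every $t\geq 9$.
   Context: An edge coloring of a graph $G$ is any assignment of colors to the edges (adjacent edges may receive the same color). A tree $T$ in an edge-colored graph is a rainbow tree if no two edges of $T$ have the same color. For $S\subseteq V(G)$, an $S$-tree is a subtree of $G$ containing all vertices of $S$. A $3$-rainbow coloring of $G$ is an edge coloring such that for every set $S$ of $3$ vertices of $G$ there is a rainbow $S$-tree in $G$. The $3$-rainbow index $rx_3(G)$ is the minimum number of colors in a $3$-rainbow coloring of $G$. $K_{2,t}$ denotes the complete bipartite graph with parts of sizes $2$ and $t$. *)

From mathcomp Require Import all_boot.
Set Implicit Arguments. Unset Strict Implicit. Unset Printing Implicit Defensive.

Section Graphs.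
Variable V : finType.
(* A simple graph is given by an (irreflexive, symmetric) adjacency relation. *)
Variable adj : rel V.

Definition edges : {set {set V}} :=
  [set e : {set V} | [exists x, exists y, adj x y && (e == [set x; y])]].

Definition frel (F : {set {set V}}) : rel V := fun x y => [set x; y] \in F.

(* (U, F) is a tree in the graph: a subgraph (F edges of G, with endpoints in
   U), nonempty, connected, and acyclic (every edge of F is a bridge, i.e.
   its endpoints are disconnected once it is removed). *)
Definition is_tree (U : {set V}) (F : {set {set V}}) : Prop :=
  [/\ F \subset edges,
      (forall e, e \in F -> e \subset U),
      U != set0,
      (forall x y, x \in U -> y \in U -> connect (frel F) x y) &
      (forall e x y, e \in F -> e = [set x; y] ->
           ~~ connect (frel (F :\ e)) x y)].

(* An edge coloring with (at most) k colors (only its values on edges matter)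
   is a 3-rainbow coloring if every 3-vertex set S lies in a rainbow tree. *)
Definition three_rainbow (k : nat) (c : {set V} -> 'I_k) : Prop :=
  forall S : {set V}, #|S| = 3 ->
    exists U F, [/\ is_tree U F, S \subset U & {in F &, injective c}].

Definition has_3rc (k : nat) : Prop := exists c : {set V} -> 'I_k, three_rainbow c.

Definition rx3_eq (k : nat) : Prop := has_3rc k /\ forall j, j < k -> ~ has_3rc j.

Definition rx3_ge (k : nat) : Prop := forall j, j < k -> ~ has_3rc j.

End Graphs.

Definition K2t_adj (t : nat) : rel ('I_2 + 'I_t)%type :=
  fun x y => match x, y with
             | inl _, inr _ | inr _, inl _ => true
             | _, _ => false
             end.
Arguments K2t_adj t : clear implicits.

From Pilot Require Import Defs.
From mathcomp Require Import all_boot zify.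
Set Implicit Arguments. Unset Strict Implicit. Unset Printing Implicit Defensive.

(* Call the two vertices of the small side of K_{2,t} hubs and the t others
   leaves.  A leaf w is seen by an edge colouring through its profile
   (colour of the edge to hub 0, colour of the edge to hub 1).  A tree of
   K_{2,t} containing three leaves i, k, l is either a star at one hub, or
   contains a leaf y joined to both hubs.  With at most 4 colours, a rainbow
   tree of the second kind is a double star centred at y, so y is one of
   i, k, l and its two colours together with one colour of each other leaf
   are four distinct colours.  Hence every three distinct profiles form a
   "good triple" (necessity), and conversely good profiles, plus two easy
   conditions for sets containing hubs, let one build a rainbow star or
   double star through any three vertices (sufficiency). *)

Definition distinct3 (x y z : nat) := [&& x != y, x != z & y != z].
Definition distinct4 (x y z u : nat) :=
  [&& x != y, x != z, x != u, y != z, y != u & z != u].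

(* [centre y x z]: the two colours of y together with one colour of x and one
   colour of z are four distinct colours, as in a rainbow double star
   centred at y and passing through x and z. *)
Definition centre (y x z : nat * nat) :=
  [|| distinct4 y.1 y.2 x.1 z.1, distinct4 y.1 y.2 x.1 z.2,
      distinct4 y.1 y.2 x.2 z.1 | distinct4 y.1 y.2 x.2 z.2].

(* Three profiles that can be joined by a rainbow tree: a star at hub 0, a
   star at hub 1, or a double star centred at one of them. *)
Definition good_triple (x y z : nat * nat) :=
  [|| distinct3 x.1 y.1 z.1, distinct3 x.2 y.2 z.2,
      centre y x z, centre x y z | centre z x y].

Fixpoint compatible (s : seq (nat * nat)) (p : nat * nat) : bool :=
  if s is x :: s' then all (fun y => good_triple x y p) s' && compatible s' p
  else true.

(* Families are explored sorted by this key, so each multiset is met once;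
   soundness only uses that [key_le] is total. *)
Definition key (p : nat * nat) : nat := p.1 * 16 + p.2.
Definition key_le (p q : nat * nat) : bool := key p <= key q.

Fixpoint no_extension (P : seq (nat * nat)) (n : nat) s m : bool :=
  if n is n'.+1 then
    all (fun p => if (m <= key p) && compatible s p
                  then no_extension P n' (rcons s p) (key p) else true) P
  else false.

Definition good_seq (s : seq (nat * nat)) : Prop :=
  forall i k l, i < k -> k < l -> l < size s ->
    good_triple (nth (0, 0) s i) (nth (0, 0) s k) (nth (0, 0) s l).

Lemma good_seq_prefix s r : good_seq (s ++ r) -> good_seq s.
Proof.
move=> good i k l ik kl ls; have := good i k l ik kl.
rewrite size_cat !nth_cat ls (ltn_trans kl ls) (ltn_trans ik (ltn_trans kl ls)).
by apply; apply: leq_trans (leq_addr _ _).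
Qed.

Lemma good_seq_compatible s p : good_seq (rcons s p) -> compatible s p.
Proof.
move=> good; have {}good i k : i < k -> k < size s ->
    good_triple (nth (0, 0) s i) (nth (0, 0) s k) p.
  move=> ik ks; have := good i k (size s) ik ks.
  by rewrite size_rcons ltnSn !nth_rcons (ltn_trans ik ks) ks ltnn eqxx; apply.
elim: s good => [|x s IH] //= good; apply/andP; split.
  by apply/(all_nthP (0, 0)) => k ks; apply: (good 0 k.+1).
by apply: IH => i k ik ks; apply: (good i.+1 k.+1).
Qed.

Lemma no_extension_sound P n s m r : no_extension P n s m -> size r = n ->
  all (mem P) r -> sorted key_le r -> all (fun p => m <= key p) r ->
  ~ good_seq (s ++ r).
Proof.
elim: n s m r => [|n IH] s m [|p r] //= noext [size_r] /andP[pP rP] sorted_pr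
  /andP[mp mr] good.
have ext : compatible s p.
  by apply/good_seq_compatible/(@good_seq_prefix _ r); rewrite cat_rcons.
move/allP: noext => /(_ p pP); rewrite mp ext /= => noext.
apply: (IH _ _ r noext size_r rP (path_sorted sorted_pr)); last by rewrite cat_rcons.
by apply: (order_path_min _ sorted_pr) => x y z; apply: leq_trans.
Qed.

(* A successful search excludes every family g 0, ..., g (n-1) of elements of P
   in which all triples of distinct indices are good: sorting the family gives
   a key-sorted good sequence, which the search has ruled out. *)
Lemma no_good_family P n (g : nat -> nat * nat) : no_extension P n [::] 0 ->
  (forall m, m < n -> g m \in P) ->
  ~ (forall i k l, i < n -> k < n -> l < n -> i != k -> i != l -> k != l ->
       good_triple (g i) (g k) (g l)).
Proof.
move=> noext gP good; set r := mkseq g n.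
have perm_r : perm_eq (sort key_le r) r by rewrite perm_sort perm_refl.
have [I perm_I sortE] := perm_iotaP (0, 0) perm_r.
have size_I : size I = n by rewrite (perm_size perm_I) size_iota size_mkseq.
have uniq_I : uniq I by rewrite (perm_uniq perm_I) iota_uniq.
have I_lt i : i < n -> nth 0 I i < n.
  move=> lt_i; have : nth 0 I i \in iota 0 (size r).
    by rewrite -(perm_mem perm_I) mem_nth // size_I.
  by rewrite mem_iota size_mkseq.
apply: (@no_extension_sound P n [::] 0 (sort key_le r) noext).
- by rewrite size_sort size_mkseq.
- rewrite (perm_all _ perm_r); apply/allP => x /mapP[m].
  by rewrite mem_iota => /andP[_ lt_m] ->; apply: gP.
- by apply: sort_sorted => x y; apply: leq_total.
- by apply/allP.
move=> i k l ik kl; rewrite cat0s size_sort size_mkseq => ln.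
have kn : k < n by lia.
have i_n : i < n by lia.
rewrite sortE !(nth_map 0) ?size_I ?size_iota ?I_lt // !nth_iota ?I_lt // !add0n.
apply: good; rewrite ?I_lt // nth_uniq ?size_I //.
- by rewrite ltn_eqF.
- by rewrite ltn_eqF // (ltn_trans ik kl).
- by rewrite ltn_eqF.
Qed.

Definition pairs (K : nat) : seq (nat * nat) :=
  [seq (x, y) | x <- iota 0 K, y <- iota 0 K].

Lemma no_good_family_4colours : no_extension (pairs 4) 9 [::] 0.
Proof. by vm_compute. Qed.

Lemma no_good_family_3colours : no_extension (pairs 3) 5 [::] 0.
Proof. by vm_compute. Qed.

Lemma card3 (T : finType) (x y z : T) :
  x != y -> x != z -> y != z -> #|[set x; y; z]| = 3.
Proof.
move=> xy xz yz; rewrite setUC !cardsU1 cards1 !inE.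
by rewrite xy ![z == _]eq_sym (negbTE xz) (negbTE yz).
Qed.

Lemma card3P (T : finType) (S : {set T}) : #|S| = 3 ->
  exists x y z, [/\ x != y, x != z, y != z & S = [set x; y; z]].
Proof.
move=> card_S; have /card_gt0P[x Sx] : 0 < #|S| by rewrite card_S.
have : #|S :\ x| == 2 by move: card_S; rewrite (cardsD1 x) Sx add1n => -[->].
case/cards2P => y [z [yz Sx_yz]].
have : y \in S :\ x by rewrite Sx_yz !inE eqxx.
have : z \in S :\ x by rewrite Sx_yz !inE eqxx orbT.
rewrite !inE ![_ == x]eq_sym => /andP[xz _] /andP[xy _].
by exists x, y, z; split => //; rewrite -(setD1K Sx) Sx_yz setUA.
Qed.

Lemma frel_sym (T : finType) (F : {set {set T}}) : symmetric (Defs.frel F).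
Proof. by move=> x y; rewrite /Defs.frel setUC. Qed.

Definition hub0 : 'I_2 := ord0.
Definition hub1 : 'I_2 := ord_max.

Lemma hubP (s : 'I_2) : s = hub0 \/ s = hub1.
Proof. by case: s => -[|[|//]] lt_s; [left|right]; apply: val_inj. Qed.

Definition other (s : 'I_2) : 'I_2 := if s == hub0 then hub1 else hub0.

Lemma otherP s s' : s' != s -> s' = other s.
Proof. by case: (hubP s) => ->; case: (hubP s') => ->. Qed.

Section K2t.
Variable t : nat.
Local Notation V := ('I_2 + 'I_t)%type.

Lemma K2t_edgeP (e : {set V}) :
  e \in edges (K2t_adj t) -> exists s w, e = [set inl s; inr w].
Proof.
rewrite inE => /existsP[x /existsP[y /andP[xy /eqP ->]]].
case: x y xy => [s|w] [s'|w'] //= _; first by exists s, w'.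
by exists s', w; rewrite setUC.
Qed.

Lemma K2t_edge s w : [set inl s; inr w] \in edges (K2t_adj t).
Proof.
by rewrite inE; apply/existsP; exists (inl s); apply/existsP; exists (inr w) => /=.
Qed.

Lemma spoke_eqP (x y : V) s w : [set x; y] = [set inl s; inr w] ->
  (x = inl s /\ y = inr w) \/ (x = inr w /\ y = inl s).
Proof.
move=> E.
have hx : x \in [set inl s; inr w] by rewrite -E set21.
have hy : y \in [set inl s; inr w] by rewrite -E set22.
have hs : inl s \in [set x; y] by rewrite E set21.
have hw : inr w \in [set x; y] by rewrite E set22.
move: hx hy hs hw; rewrite !inE.
by case/orP => /eqP ->; case/orP => /eqP ->; rewrite ?eqxx //=; auto.
Qed.

Lemma spoke_inj s w s' w' :
  [set inl s; inr w] = [set inl s'; inr w'] :> {set V} -> (s, w) = (s', w').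
Proof. by case/spoke_eqP => [[[->] [->]]|[]]. Qed.

Definition spoke (F : {set {set V}}) (s : 'I_2) (w : 'I_t) : bool :=
  [set inl s; inr w] \in F.

Section TreeShape.
Variables (U : {set V}) (F : {set {set V}}).
Hypothesis F_edges : F \subset edges (K2t_adj t).
Hypothesis U_connected : forall x y, x \in U -> y \in U -> connect (Defs.frel F) x y.

Lemma tree_spoke w w' : w != w' -> inr w \in U -> inr w' \in U -> exists s, spoke F s w.
Proof.
move=> ww' Uw Uw'; have /connectP[[|v p] /= walk last_p] := U_connected Uw Uw'.
  by case: last_p => E; rewrite E eqxx in ww'.
case/andP: walk => Fv _; have [s [w0 E]] := K2t_edgeP (subsetP F_edges _ Fv).
by case: (spoke_eqP E) => [[]//|[[->] _]]; exists s; rewrite /spoke -E.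
Qed.

(* If both hubs carry spokes of F then some leaf is joined to both hubs:
   otherwise hub 0 and its leaves would form a union of components of F,
   separating the leaves w and w'. *)
Lemma tree_joins_hubs s s' w w' : s != s' -> inr w \in U -> inr w' \in U ->
  spoke F s w -> spoke F s' w' -> exists y, spoke F hub0 y && spoke F hub1 y.
Proof.
wlog s_hub : s s' w w' / s = hub0.
  move=> gen ss' Uw Uw' Fw Fw'; case: (hubP s) => s_hub; first exact: (gen s s' w w').
  apply: (gen s' s w' w) => //; last by rewrite eq_sym.
  by case: (hubP s') ss' => ->; rewrite s_hub.
move=> ss' Uw Uw' Fw Fw'; subst s.
have s'_hub : s' = hub1 by case: (hubP s') ss' => ->.
subst s'.
apply/existsP; apply: contraT => /existsPn no_double.
pose A := [pred v : V | if v is inr y then spoke F hub0 y else v == inl hub0].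
have A_closed : closed (Defs.frel F) A.
  move=> x y /[dup] Fxy /(subsetP F_edges)/K2t_edgeP[s [y0 E]].
  move: Fxy (no_double y0); rewrite /Defs.frel E => Fs.
  have Fs_spoke : spoke F s y0 by [].
  case: (spoke_eqP E) => -[-> ->]; rewrite !inE /=;
    case: (hubP s) Fs_spoke => -> ->; rewrite ?eqxx // andbT => /negbTE //.
have := closed_connect A_closed (U_connected Uw Uw'); rewrite !inE /= Fw => /esym Fw0.
by have := no_double w'; rewrite Fw0 Fw'.
Qed.

End TreeShape.
End K2t.

Section Necessity.
Variables (t j : nat) (c : {set 'I_2 + 'I_t} -> 'I_j).
Local Notation V := ('I_2 + 'I_t)%type.
Hypothesis j_le4 : j <= 4.
Hypothesis c_rainbow : three_rainbow (K2t_adj t) c.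

Definition colour (s : 'I_2) (w : 'I_t) : nat := c [set inl s; inr w].
Definition profile (w : 'I_t) : nat * nat := (colour hub0 w, colour hub1 w).

Section RainbowSpokes.
Variable F : {set {set V}}.
Hypothesis F_rainbow : {in F &, injective c}.

Lemma rainbow_spokes s w s' w' : spoke F s w -> spoke F s' w' ->
  (s, w) != (s', w') -> colour s w != colour s' w'.
Proof.
move=> Fsw Fsw' sw_neq; apply: contraNneq sw_neq => /val_inj same.
exact/eqP/spoke_inj/(F_rainbow Fsw Fsw').
Qed.

Lemma rainbow_spokes_le (sp : seq ('I_2 * 'I_t)) : uniq sp ->
  all (fun p => spoke F p.1 p.2) sp -> size sp <= j.
Proof.
move=> uniq_sp /allP Fsp; pose col_of (p : 'I_2 * 'I_t) := c [set inl p.1; inr p.2].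
have uniq_cols : uniq (map col_of sp).
  rewrite map_inj_in_uniq // => -[s w] [s' w'] /Fsp Fsw /Fsp Fsw' same.
  exact/spoke_inj/(F_rainbow Fsw Fsw').
by rewrite -(size_map col_of) -(card_uniqP uniq_cols) -[j in _ <= j]card_ord max_card.
Qed.

Lemma rainbow_centre y x z sx sz : y != x -> y != z -> x != z ->
  spoke F hub0 y -> spoke F hub1 y -> spoke F sx x -> spoke F sz z ->
  centre (profile y) (profile x) (profile z).
Proof.
move=> yx yz xz Fy0 Fy1 Fx Fz.
have distinct : distinct4 (colour hub0 y) (colour hub1 y) (colour sx x) (colour sz z).
  rewrite /distinct4; apply/and5P; split; try apply/andP; try split; apply: rainbow_spokes;
  by rewrite // xpair_eqE ?(negbTE yx) ?(negbTE yz) ?(negbTE xz) ?andbF.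
by case: (hubP sx) distinct => ->; case: (hubP sz) => -> distinct;
  rewrite /centre /= distinct ?orbT.
Qed.

(* If some leaf y carries both spokes, it is one of i, k, l (otherwise F
   would have five spokes), and the triple is good by [rainbow_centre]. *)
Lemma double_star_good i k l si sk sl y : i != k -> i != l -> k != l ->
  spoke F si i -> spoke F sk k -> spoke F sl l -> spoke F hub0 y -> spoke F hub1 y ->
  good_triple (profile i) (profile k) (profile l).
Proof.
move=> ik il kl Fi Fk Fl Fy0 Fy1.
have [y_i|yi] := eqVneq y i.
  by subst y; rewrite /good_triple (@rainbow_centre i k l sk sl) ?orTb ?orbT.
have [y_k|yk] := eqVneq y k.
  by subst y; rewrite /good_triple (@rainbow_centre k i l si sl) ?orTb ?orbT // eq_sym.
have [y_l|yl] := eqVneq y l.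
  by subst y; rewrite /good_triple (@rainbow_centre l i k si sk) ?orbT // eq_sym.
have := leq_trans (rainbow_spokes_le
  (sp := [:: (hub0, y); (hub1, y); (si, i); (sk, k); (sl, l)]) _ _) j_le4.
rewrite /= Fy0 Fy1 Fi Fk Fl !inE !xpair_eqE (negbTE yi) (negbTE yk) (negbTE yl).
by rewrite (negbTE ik) (negbTE il) (negbTE kl) !andbF => /(_ isT isT).
Qed.

Lemma star_good s i k l : i != k -> i != l -> k != l ->
  spoke F s i -> spoke F s k -> spoke F s l ->
  good_triple (profile i) (profile k) (profile l).
Proof.
move=> ik il kl Fi Fk Fl; have pair_neq w w' : w != w' -> (s, w) != (s, w').
  by move=> ww'; rewrite xpair_eqE (negbTE ww') andbF.
have distinct : distinct3 (colour s i) (colour s k) (colour s l).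
  by rewrite /distinct3 !rainbow_spokes ?pair_neq.
by case: (hubP s) distinct => -> distinct; rewrite /good_triple /= distinct ?orbT.
Qed.

End RainbowSpokes.

(* Main necessity result: take a rainbow tree through i, k, l; either some
   leaf is joined to both hubs, or [tree_joins_hubs] puts all spokes at one
   hub. *)
Lemma profiles_good i k l : i != k -> i != l -> k != l ->
  good_triple (profile i) (profile k) (profile l).
Proof.
move=> ik il kl; have ki : k != i by rewrite eq_sym.
have li : l != i by rewrite eq_sym.
have neq_inr w w' : w != w' -> inr w != inr w' :> V.
  by move=> ww'; apply: contraNneq ww' => -[->].
have [U [F [[F_edges _ _ U_conn _] SU F_rainbow]]] :=
  c_rainbow (card3 (neq_inr _ _ ik) (neq_inr _ _ il) (neq_inr _ _ kl)).
have [Ui Uk Ul] : [/\ inr i \in U, inr k \in U & inr l \in U].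
  by split; apply: (subsetP SU); rewrite !inE eqxx ?orbT.
have [si Fi] := tree_spoke F_edges U_conn ik Ui Uk.
have [sk Fk] := tree_spoke F_edges U_conn ki Uk Ui.
have [sl Fl] := tree_spoke F_edges U_conn li Ul Ui.
have [/existsP[y /andP[Fy0 Fy1]] | /existsPn no_double] :=
  boolP [exists y, spoke F hub0 y && spoke F hub1 y].
  exact: double_star_good Fi Fk Fl Fy0 Fy1.
have same_hub s s' w w' : inr w \in U -> inr w' \in U ->
    spoke F s w -> spoke F s' w' -> s = s'.
  move=> Uw Uw' Fw Fw'; apply/eqP; apply: contraT => ss'.
  have [y] := tree_joins_hubs F_edges U_conn ss' Uw Uw' Fw Fw'.
  by rewrite (negbTE (no_double y)).
have sk_si := same_hub _ _ _ _ Uk Ui Fk Fi; have sl_si := same_hub _ _ _ _ Ul Ui Fl Fi.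
by subst sk sl; apply: star_good Fi Fk Fl.
Qed.
End Necessity.

Lemma no_small_rainbow_colouring t j K n : j <= K -> K <= 4 -> n <= t ->
  no_extension (pairs K) n [::] 0 -> ~ has_3rc (K2t_adj t) j.
Proof.
move=> jK K4 nt noext [c c_rainbow].
pose g m := if insub m is Some w then profile c w else (0, 0).
have gE m (mt : m < t) : g m = profile c (Ordinal mt) by rewrite /g insubT.
apply: (@no_good_family _ _ g noext) => [m mn | i k l i_n k_n l_n ik il kl].
  rewrite (gE m (leq_trans mn nt)); apply: allpairs_f;
  by rewrite mem_iota add0n (leq_trans (ltn_ord _) jK).
rewrite (gE i (leq_trans i_n nt)) (gE k (leq_trans k_n nt)) (gE l (leq_trans l_n nt)).
exact: (profiles_good (leq_trans jK K4) c_rainbow).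
Qed.

Section DoubleStar.
Variables (t : nat) (nbhd : 'I_2 -> {set 'I_t}).
Local Notation V := ('I_2 + 'I_t)%type.

Definition ds_edges : {set {set V}} :=
  [set [set inl p.1; inr p.2] | p : 'I_2 * 'I_t & p.2 \in nbhd p.1].

Definition ds_vertices : {set V} :=
  [set v : V | if v is inr w then (w \in nbhd hub0) || (w \in nbhd hub1)
               else if v is inl s then nbhd s != set0 else false].

Hypothesis ds_nonempty : exists s, nbhd s != set0.
Hypothesis ds_common_uniq : forall w w',
  w \in nbhd hub0 :&: nbhd hub1 -> w' \in nbhd hub0 :&: nbhd hub1 -> w = w'.
Hypothesis ds_hubs_linked :
  (exists w, w \in nbhd hub0 :&: nbhd hub1) \/ nbhd hub0 = set0 \/ nbhd hub1 = set0.

Lemma ds_edgeP e :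
  reflect (exists2 p, p.2 \in nbhd p.1 & e = [set inl p.1; inr p.2]) (e \in ds_edges).
Proof. by apply: (iffP imsetP) => -[p nbp ->]; exists p; rewrite // ?inE in nbp *. Qed.

Lemma ds_spoke s w : spoke ds_edges s w = (w \in nbhd s).
Proof.
apply/ds_edgeP/idP => [[[s' w'] /= nbw' /spoke_inj [-> ->]] // | nbw].
by exists (s, w).
Qed.

Local Notation linked := (connect (Defs.frel ds_edges)).

Lemma linked_sym : connect_sym (Defs.frel ds_edges).
Proof. exact/sym_connect_sym/frel_sym. Qed.

Lemma ds_linked s w : w \in nbhd s -> linked (inr w) (inl s).
Proof. by rewrite -ds_spoke => Fsw; apply: connect1; rewrite /Defs.frel setUC. Qed.

Lemma ds_hub_of v : v \in ds_vertices -> exists2 s, nbhd s != set0 & linked v (inl s).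
Proof.
rewrite inE; case: v => [s | w] used; first by exists s.
have [s nbw] : exists s, w \in nbhd s by case/orP: used => nbw; [exists hub0 | exists hub1].
by exists s; [apply/set0Pn; exists w | apply: ds_linked].
Qed.

Lemma ds_hubs_connected s s' : nbhd s != set0 -> nbhd s' != set0 ->
  linked (inl s) (inl s').
Proof.
have [-> // | ss'] := eqVneq s s'; move=> used used'.
case: ds_hubs_linked => [[y] | empty].
  rewrite inE => /andP[nb0 nb1]; have ys := ds_linked nb0; have ys' := ds_linked nb1.
  case: (hubP s) ss' => ->; case: (hubP s') => -> // _.
    by apply: connect_trans _ ys'; rewrite linked_sym.
  by apply: connect_trans _ ys; rewrite linked_sym.
by case: (hubP s) ss' used used' => ->; case: (hubP s') => -> // _;
  case: empty => ->; rewrite eqxx.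
Qed.

Lemma ds_connected x y : x \in ds_vertices -> y \in ds_vertices -> linked x y.
Proof.
move=> /ds_hub_of[s used xs] /ds_hub_of[s' used' ys'].
apply: connect_trans xs (connect_trans (ds_hubs_connected used used') _).
by rewrite linked_sym.
Qed.

Lemma ds_common_leaf s w w' : w \in nbhd s -> w \in nbhd (other s) ->
  w' \in nbhd s -> w' \in nbhd (other s) -> w = w'.
Proof.
case: (hubP s) => -> /= nbw nbw' nbw2 nbw2'; apply: ds_common_uniq;
  by rewrite inE ?nbw ?nbw' ?nbw2 ?nbw2'.
Qed.

(* Every spoke {s, w} is a bridge: without it, the component of hub s (when w
   is the common leaf) or the set {w} (otherwise) is closed. *)
Lemma ds_bridge s w : w \in nbhd s -> exists A : pred V,
  closed (Defs.frel (ds_edges :\ [set inl s; inr w])) A /\ (inl s \in A) != (inr w \in A).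
Proof.
move=> nbw.
have other_edge u v : Defs.frel (ds_edges :\ [set inl s; inr w]) u v ->
    exists s' w', [/\ w' \in nbhd s', (s', w') != (s, w)
                    & [set u; v] = [set inl s'; inr w']].
  rewrite /Defs.frel in_setD1 => /andP[neq /ds_edgeP[[s' w'] /= nbw' E]].
  by exists s', w'; split => //; move: neq; rewrite E; apply: contraNneq => -[-> ->].
have [nbw_other | nbw_other] := boolP (w \in nbhd (other s)).
- exists [pred v : V | if v is inr w' then (w' \in nbhd s) && (w' != w) else v == inl s].
  split; last by rewrite !inE /= !eqxx andbF.
  move=> u v /other_edge[s' [w' [nbw' neq E]]].
  suff key : (s' == s) = (w' \in nbhd s) && (w' != w).
    by case: (spoke_eqP E) => -[-> ->]; rewrite !inE /= (inj_eq inl_inj) key.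
  have [s'_s | s's] := eqVneq s' s.
    by subst s'; rewrite nbw'; move: neq; rewrite xpair_eqE eqxx.
  rewrite (otherP s's) in nbw'; case nbs: (w' \in nbhd s) => //=.
  by rewrite (ds_common_leaf nbs nbw' nbw nbw_other) eqxx.
- exists (pred1 (inr w)); split; last by rewrite !inE /= !eqxx.
  move=> u v /other_edge[s' [w' [nbw' neq E]]].
  suff key : (w' == w) = false.
    by case: (spoke_eqP E) => -[-> ->]; rewrite !inE /= (inj_eq inr_inj) key.
  apply: contraNF nbw_other => /eqP w'w; subst w'.
  have s's : s' != s by move: neq; rewrite xpair_eqE eqxx andbT.
  by rewrite -(otherP s's).
Qed.

Lemma ds_is_tree : is_tree (K2t_adj t) ds_vertices ds_edges.
Proof.
split.
- by apply/subsetP => e /ds_edgeP[p _ ->]; apply: K2t_edge.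
- move=> e /ds_edgeP[[s w] /= nbw ->]; apply/subsetP => v; rewrite !inE.
  case/orP => /eqP ->; first by apply/set0Pn; exists w.
  by case: (hubP s) nbw => -> ->; rewrite ?orbT.
- by case: ds_nonempty => s used; apply/set0Pn; exists (inl s); rewrite inE.
- exact: ds_connected.
- move=> e x y /ds_edgeP[[s w] /= nbw ->] E; have [A [A_closed A_cut]] := ds_bridge nbw.
  apply/negP => /(closed_connect A_closed) xy.
  case: (spoke_eqP (esym E)) => -[x_def y_def]; move: A_cut;
  by rewrite -x_def -y_def xy eqxx.
Qed.
End DoubleStar.

Lemma uniq_map_inj (T U : eqType) (f : T -> U) (s : seq T) :
  uniq (map f s) -> {in s &, injective f}.
Proof.
elim: s => [|z s IH] //= /andP[fz_notin uniq_fs] x y; rewrite !inE.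
case/orP => [/eqP -> | xs]; case/orP => [/eqP -> | ys] // fxy.
- by move: fz_notin; rewrite fxy map_f.
- by move: fz_notin; rewrite -fxy map_f.
- exact: IH.
Qed.

Lemma distinct3_uniq x y z : distinct3 x y z = uniq [:: x; y; z].
Proof. by rewrite /distinct3 /= !inE !negb_or andbT andbA. Qed.

Lemma distinct4_uniq x y z u : distinct4 x y z u = uniq [:: x; y; z; u].
Proof. by rewrite /distinct4 /= !inE !negb_or !andbT !andbA. Qed.

(* Condition for a hub and two leaves i, k, where c (resp. c') gives the
   colours of the spokes at this hub (resp. at the other hub): a star at the
   hub, or a double star centred at i or at k. *)
Definition hub_pair_ok (T : Type) (c c' : T -> nat) (i k : T) : bool :=
  [|| c i != c k, distinct3 (c i) (c' i) (c' k) | distinct3 (c k) (c' k) (c' i)].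

Section Sufficiency.
Variables (t : nat) (a b : 'I_t -> nat).
Local Notation V := ('I_2 + 'I_t)%type.
Hypotheses (a_lt4 : forall w, a w < 4) (b_lt4 : forall w, b w < 4).

Definition hub_colour (s : 'I_2) (w : 'I_t) : nat := if s == hub0 then a w else b w.

Definition profile_colouring (e : {set V}) : 'I_4 :=
  if [pick p : 'I_2 * 'I_t | e == [set inl p.1; inr p.2]] is Some p
  then inord (hub_colour p.1 p.2) else ord0.

Lemma profile_colouringE s w :
  profile_colouring [set inl s; inr w] = hub_colour s w :> nat.
Proof.
rewrite /profile_colouring; case: pickP => [[s' w'] /eqP /spoke_inj [-> ->] | none].
  by rewrite inordK // /hub_colour; case: ifP.
by have := none (s, w); rewrite eqxx.
Qed.

Definition covered (S : {set V}) : Prop := exists U F,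
  [/\ is_tree (K2t_adj t) U F, S \subset U & {in F &, injective profile_colouring}].

Lemma covered_sub (S S' : {set V}) : covered S -> S' \subset S -> covered S'.
Proof.
by case=> U [F [tree SU rainbow]] S'S; exists U, F; split; last exact: rainbow;
  [exact: tree | exact: subset_trans S'S SU].
Qed.

Lemma ds_covered (nbhd : 'I_2 -> {set 'I_t}) (sp : seq ('I_2 * 'I_t)) (S : {set V}) :
  (exists s, nbhd s != set0) ->
  (forall w w', w \in nbhd hub0 :&: nbhd hub1 ->
     w' \in nbhd hub0 :&: nbhd hub1 -> w = w') ->
  (exists w, w \in nbhd hub0 :&: nbhd hub1) \/ nbhd hub0 = set0 \/ nbhd hub1 = set0 ->
  (forall s w, w \in nbhd s -> (s, w) \in sp) ->
  uniq [seq hub_colour p.1 p.2 | p <- sp] -> S \subset ds_vertices nbhd -> covered S.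
Proof.
move=> nonempty common_uniq hubs_linked nbhd_sp uniq_cols SU.
exists (ds_vertices nbhd), (ds_edges nbhd); split => //; first exact: ds_is_tree.
move=> _ _ /ds_edgeP[[s w] /= nbw ->] /ds_edgeP[[s' w'] /= nbw' ->].
move/(congr1 (@nat_of_ord 4)); rewrite !profile_colouringE => same_colour.
by have [-> ->] := uniq_map_inj uniq_cols (nbhd_sp _ _ nbw) (nbhd_sp _ _ nbw') same_colour.
Qed.

Lemma star_covered s (L : seq 'I_t) (S : {set V}) : L != [::] ->
  uniq (map (hub_colour s) L) ->
  S \subset [set v : V | if v is inr w then w \in L else v == inl s] -> covered S.
Proof.
move=> L_nonempty uniq_cols SL.
pose nbhd s' := if s' == s then [set w in L] else set0.
have nbhdP s' w : (w \in nbhd s') = (s' == s) && (w \in L).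
  by rewrite /nbhd; case: eqP; rewrite ?inE.
have [w0 w0L] : exists w, w \in L.
  by case: (L) L_nonempty => [|w ?] //; exists w; rewrite inE eqxx.
have s_used : nbhd s != set0 by apply/set0Pn; exists w0; rewrite nbhdP eqxx.
apply: (@ds_covered nbhd [seq (s, w) | w <- L]).
- by exists s.
- move=> w w'; rewrite !inE !nbhdP => /andP[/andP[/eqP s_hub0 _] /andP[/eqP s_hub1 _]].
  by rewrite -s_hub1 in s_hub0.
- right; case: (hubP s) => s_hub; [right | left]; apply/setP => w;
  by rewrite nbhdP s_hub inE.
- by move=> s' w; rewrite nbhdP => /andP[/eqP -> wL]; apply: map_f.
- by rewrite -map_comp.
apply: subset_trans SL _; apply/subsetP => -[s' | w]; rewrite !inE.
  by move/eqP=> [->].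
by move=> wL; rewrite !nbhdP wL; case: (hubP s) => ->; rewrite ?orbT.
Qed.

Lemma centred_covered y (att : seq ('I_2 * 'I_t)) (S : {set V}) :
  uniq (y :: map snd att) ->
  uniq (a y :: b y :: [seq hub_colour p.1 p.2 | p <- att]) ->
  S \subset [set v : V | if v is inr w then w \in y :: map snd att else true] ->
  covered S.
Proof.
move=> /= /andP[y_notin uniq_snd] uniq_cols SU.
pose nbhd s := y |: [set w | (s, w) \in att].
have nbhdP s w : (w \in nbhd s) = (w == y) || ((s, w) \in att) by rewrite !inE.
have y_nbhd s : y \in nbhd s by rewrite nbhdP eqxx.
have used s : nbhd s != set0 by apply/set0Pn; exists y.
have common w : w \in nbhd hub0 :&: nbhd hub1 -> w = y.
  rewrite inE !nbhdP; case: eqVneq => //= _ /andP[att0 att1].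
  by have /(congr1 (fun p => val p.1)) := uniq_map_inj uniq_snd att0 att1 erefl.
apply: (@ds_covered nbhd ((hub0, y) :: (hub1, y) :: att)).
- by exists hub0.
- by move=> w w' /common -> /common ->.
- by left; exists y; rewrite inE !y_nbhd.
- move=> s w; rewrite nbhdP !inE => /orP[/eqP -> | ->]; last by rewrite !orbT.
  by case: (hubP s) => ->; rewrite eqxx ?orbT.
- exact: uniq_cols.
apply: subset_trans SU _; apply/subsetP => -[s _ | w]; first by rewrite inE used.
rewrite inE /= in_cons => /orP[/eqP -> | /mapP[[s w'] /= att_sw ->]].
  by rewrite inE !y_nbhd.
by rewrite inE !nbhdP; case: (hubP s) att_sw => -> ->; rewrite ?orbT.
Qed.

Lemma centre_covered y x z : y != x -> y != z -> x != z ->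
  centre (a y, b y) (a x, b x) (a z, b z) -> covered [set inr y; inr x; inr z].
Proof.
move=> yx yz xz.
have attach sx sz : distinct4 (a y) (b y) (hub_colour sx x) (hub_colour sz z) ->
    covered [set inr y; inr x; inr z].
  rewrite distinct4_uniq => uniq_cols.
  apply: (@centred_covered y [:: (sx, x); (sz, z)]) => //.
    by rewrite /= !inE negb_or yx yz xz.
  by rewrite !subUset !sub1set !inE !eqxx ?orbT.
by case/or4P; [apply: (attach hub0 hub0) | apply: (attach hub0 hub1)
  | apply: (attach hub1 hub0) | apply: (attach hub1 hub1)].
Qed.

Lemma leaves_covered i k l : i != k -> i != l -> k != l ->
  good_triple (a i, b i) (a k, b k) (a l, b l) -> covered [set inr i; inr k; inr l].
Proof.
move=> ik il kl; have ki : k != i by rewrite eq_sym.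
have li : l != i by rewrite eq_sym.
have lk : l != k by rewrite eq_sym.
case/or4P => [D | D | /(centre_covered ki kl il) C |
              /orP[/(centre_covered ik il kl) C | /(centre_covered li lk ik) C]].
- apply: (@star_covered hub0 [:: i; k; l]) => //; first by rewrite -distinct3_uniq.
  by rewrite !subUset !sub1set !inE !eqxx ?orbT.
- apply: (@star_covered hub1 [:: i; k; l]) => //; first by rewrite -distinct3_uniq.
  by rewrite !subUset !sub1set !inE !eqxx ?orbT.
all: by apply: covered_sub C _; rewrite !subUset !sub1set !inE !eqxx ?orbT.
Qed.

Lemma hub_leaves_covered s i k : i != k ->
  hub_pair_ok (hub_colour s) (hub_colour (other s)) i k ->
  covered [set inl s; inr i; inr k].
Proof.
move=> ik; have ki : k != i by rewrite eq_sym.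
have centred_at x z : x != z ->
    distinct3 (hub_colour s x) (hub_colour (other s) x) (hub_colour (other s) z) ->
    covered [set inl s; inr x; inr z].
  move=> xz D; apply: (@centred_covered x [:: (other s, z)]).
  - by rewrite /= inE andbT.
  - by case: (hubP s) D => ->; rewrite /distinct3 /hub_colour /other /= !inE; lia.
  - by rewrite !subUset !sub1set !inE !eqxx ?orbT.
case/or3P => [D | /(centred_at i k ik) // | /(centred_at k i ki) C].
  apply: (@star_covered s [:: i; k]) => //=; first by rewrite inE andbT.
  by rewrite !subUset !sub1set !inE !eqxx ?orbT.
by apply: covered_sub C _; rewrite !subUset !sub1set !inE !eqxx ?orbT.
Qed.

Lemma hubs_leaf_covered i : a i != b i -> covered [set inl hub0; inl hub1; inr i].
Proof.
move=> ab; apply: (@centred_covered i [::]) => //=; first by rewrite inE andbT.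
by rewrite !subUset !sub1set !inE !eqxx.
Qed.

Hypothesis leaves_ok : forall i k l, i != k -> i != l -> k != l ->
  good_triple (a i, b i) (a k, b k) (a l, b l).
Hypothesis hubs_ok : forall s i k, i != k ->
  hub_pair_ok (hub_colour s) (hub_colour (other s)) i k.
Hypothesis two_colours : forall i, a i != b i.

Lemma profile_colouring_rainbow : three_rainbow (K2t_adj t) profile_colouring.
Proof.
move=> S /card3P[x [y [z [xy xz yz ->]]]].
case: x y z xy xz yz => [s1 | i] [s2 | k] [s3 | l]; rewrite ?(inj_eq inr_inj) => xy xz yz.
-
  by case: (hubP s1) xy xz => ->; case: (hubP s2) yz => ->; case: (hubP s3) => ->;
    rewrite ?eqxx.
- apply: covered_sub (hubs_leaf_covered (two_colours l)) _.
  by case: (hubP s1) => ->; case: (hubP s2) => ->;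
    rewrite !subUset !sub1set !inE !eqxx ?orbT.
- apply: covered_sub (hubs_leaf_covered (two_colours k)) _.
  by case: (hubP s1) => ->; case: (hubP s3) => ->;
    rewrite !subUset !sub1set !inE !eqxx ?orbT.
- exact: hub_leaves_covered yz (hubs_ok s1 yz).
- apply: covered_sub (hubs_leaf_covered (two_colours i)) _.
  by case: (hubP s2) => ->; case: (hubP s3) => ->;
    rewrite !subUset !sub1set !inE !eqxx ?orbT.
- apply: covered_sub (hub_leaves_covered xz (hubs_ok s2 xz)) _.
  by rewrite !subUset !sub1set !inE !eqxx ?orbT.
- apply: covered_sub (hub_leaves_covered xy (hubs_ok s3 xy)) _.
  by rewrite !subUset !sub1set !inE !eqxx ?orbT.
- exact: leaves_covered (leaves_ok xy xz yz).
Qed.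

End Sufficiency.

Definition palette : seq (nat * nat) :=
  [:: (0, 1); (0, 2); (1, 0); (1, 3); (2, 0); (2, 3); (3, 1); (3, 2)].

Definition hub0_palette (n : nat) : nat := (nth (0, 0) palette n).1.
Definition hub1_palette (n : nat) : nat := (nth (0, 0) palette n).2.

Lemma palette_lt4 n : (hub0_palette n < 4) && (hub1_palette n < 4).
Proof.
rewrite /hub0_palette /hub1_palette.
by case: n => [|[|[|[|[|[|[|[|n]]]]]]]] //; rewrite nth_default.
Qed.

Lemma palette_leaves_ok i k l : i < 8 -> k < 8 -> l < 8 -> i != k -> i != l -> k != l ->
  good_triple (hub0_palette i, hub1_palette i) (hub0_palette k, hub1_palette k)
              (hub0_palette l, hub1_palette l).
Proof.
have check : all (fun i => all (fun k => all (fun l => [|| i == k, i == l, k == l |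
    good_triple (hub0_palette i, hub1_palette i) (hub0_palette k, hub1_palette k)
                (hub0_palette l, hub1_palette l)]) (iota 0 8)) (iota 0 8)) (iota 0 8).
  by vm_compute.
move=> i8 k8 l8 ik il kl.
have := allP (allP (allP check i _) k _) l; rewrite !mem_iota /= i8 k8 l8.
by rewrite (negbTE ik) (negbTE il) (negbTE kl); apply.
Qed.

Lemma palette_hubs_ok i k : i < 8 -> k < 8 -> i != k ->
  hub_pair_ok hub0_palette hub1_palette i k && hub_pair_ok hub1_palette hub0_palette i k.
Proof.
have check : all (fun i => all (fun k => (i == k) ||
    hub_pair_ok hub0_palette hub1_palette i k && hub_pair_ok hub1_palette hub0_palette i k)
    (iota 0 8)) (iota 0 8).
  by vm_compute.
move=> i8 k8 ik; have := allP (allP check i _) k; rewrite !mem_iota /= i8 k8.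
by rewrite (negbTE ik); apply.
Qed.

Lemma palette_two_colours i : i < 8 -> hub0_palette i != hub1_palette i.
Proof.
have check : all (fun i => hub0_palette i != hub1_palette i) (iota 0 8) by vm_compute.
by move=> i8; apply: (allP check); rewrite mem_iota.
Qed.

Theorem K2t_three_rainbow_4 t : t <= 8 -> has_3rc (K2t_adj t) 4.
Proof.
move=> t8; have lt8 (w : 'I_t) : w < 8 := leq_trans (ltn_ord w) t8.
pose a (w : 'I_t) := hub0_palette w; pose b (w : 'I_t) := hub1_palette w.
exists (profile_colouring a b); apply: profile_colouring_rainbow.
- by move=> w; case/andP: (palette_lt4 w).
- by move=> w; case/andP: (palette_lt4 w).
- by move=> i k l; apply: palette_leaves_ok; rewrite ?lt8.
- move=> s i k ik; have /andP[ok0 ok1] := palette_hubs_ok (lt8 i) (lt8 k) ik.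
  by case: (hubP s) => ->.
- by move=> i; apply: palette_two_colours (lt8 i).
Qed.

Theorem lemma4 :
  (forall t : nat, 5 <= t <= 8 -> rx3_eq (K2t_adj t) 4) /\
  (forall t : nat, 9 <= t -> rx3_ge (K2t_adj t) 5).
Proof.
split.
- move=> t /andP[t5 t8]; split; first exact: K2t_three_rainbow_4.
  by move=> j j4; apply: (no_small_rainbow_colouring _ _ t5 no_good_family_3colours).
- by move=> t t9 j j5; apply: (no_small_rainbow_colouring _ _ t9 no_good_family_4colours).
Qed.
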